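(* Let $e=e_{\gamma,a}$ be the directed edge of $\Gamma$ with initial vertex (the element represented by) $\gamma$ and label $a\in\{x^{\pm1},y^{\pm1}\}$, where $\gamma\equiv x^{i_n}y^{\epsilon_n}\cdots x^{i_1}y^{\epsilon_1}x^{i_0}\in\mathcal N$ (with $n\ge0$, $\epsilon_j\in\{\pm1\}$, $i_j\in\mathbb Z$). Then $e$ does not lie on the tree $T$ if and only if one of the following holds: (1) $a\equiv y$, $n\ge1$ and $i_0\ge1$; (2) $a\equiv y^{-1}$, $n\ge1$ and $i_0\ge2$. In particular, all edges of $\Gamma$ labeled $x^{\pm1}$ lie on $T$.
   Context: $F$ is Thompson's group with generators $x,y$, $A=\{x^{\pm1},y^{\pm1}\}$, and $\Gamma$ is the Cayley graph of $F$ with respect to $A$. $\mathcal N$ is the set of words over $A$ containing no subword $aa^{-1}$ ($a\in A$), $y^\epsilon x^iy$, or $y^\epsilon x^{i+1}y^{-1}$ ($\epsilon=\pm1$, $i\ge1$); it is a set of unique normal forms for $F$ (the irreducible words of Guba–Sapir's convergent rewriting system). $T$ is the subtree of $\Gamma$ such that the labels of non-backtracking paths in $T$ starting at the identity vertex are exactly the words in $\mathcal N$. *)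

From HB Require Import structures.
From mathcomp Require Import all_boot all_order all_algebra.
Set Implicit Arguments. Unset Strict Implicit. Unset Printing Implicit Defensive.
Import Order.TTheory GRing.Theory Num.Theory.

(* Letters of A = {x, x^-1, y, y^-1}. *)
Inductive letter := xl | xi | yl | yi.

Definition letter_eqb (a b : letter) : bool :=
  match a, b with
  | xl, xl | xi, xi | yl, yl | yi, yi => true
  | _, _ => false
  end.
Lemma letter_eqP : Equality.axiom letter_eqb.
Proof. by case; case; constructor. Qed.
HB.instance Definition _ := hasDecEq.Build letter letter_eqP.

Definition linv (a : letter) : letter :=
  match a with xl => xi | xi => xl | yl => yi | yi => yl end.

Definition word := seq letter.
Definition winv (w : word) : word := rev (map linv w).

Definition wcomm (a b : word) : word := winv a ++ winv b ++ a ++ b.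

(* Relators of the standard presentation
   F = < x, y | [x y^-1, x^-1 y x], [x y^-1, x^-2 y x^2] >. *)
Definition relator1 : word := wcomm [:: xl; yi] [:: xi; yl; xl].
Definition relator2 : word := wcomm [:: xl; yi] [:: xi; xi; yl; xl; xl].

Inductive weq : word -> word -> Prop :=
| weq_refl w : weq w w
| weq_sym u v : weq u v -> weq v u
| weq_trans u v w : weq u v -> weq v w -> weq u w
| weq_free u a v : weq (u ++ a :: linv a :: v) (u ++ v)
| weq_rel1 u v : weq (u ++ relator1 ++ v) (u ++ v)
| weq_rel2 u v : weq (u ++ relator2 ++ v) (u ++ v).

(* The set N of Guba--Sapir normal forms. *)
Definition ylet (e : bool) : letter := if e then yl else yi.

Definition inN (w : word) : Prop :=
  (forall u a v, w <> u ++ a :: linv a :: v) /\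
  (forall u e i v, (1 <= i)%N ->
     w <> u ++ ylet e :: nseq i xl ++ yl :: v) /\
  (forall u e i v, (1 <= i)%N ->
     w <> u ++ ylet e :: nseq i.+1 xl ++ yi :: v).

Definition xpow (i : int) : word :=
  if (0 <= i)%R then nseq `|i|%N xl else nseq `|i|%N xi.

Fixpoint nfword (n : nat) (ex : nat -> int) (eps : nat -> bool) : word :=
  match n with
  | 0 => xpow (ex 0%N)
  | k.+1 => xpow (ex k.+1) ++ ylet (eps k.+1) :: nfword k ex eps
  end.

(* The (undirected) edge e_{g,a} of the Cayley graph, from (the element
   represented by) g to g a, lies on the tree T: it ex traversed by the
   path from the identity labelled by some word of N. *)
Definition onT (g : word) (a : letter) : Prop :=
  exists w u b v, inN w /\ w = u ++ b :: v /\
    ((weq u g /\ b = a) \/ (weq u (rcons g a) /\ b = linv a)).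

(* Uniqueness of the normal forms is proved with an explicit model of F.
   Words act on states (Z, t): Z is a list of letters x_k^{+-1}, where
   x_k = x^{1-k} y x^{k-1}, kept in reduced order, and t is an exponent of x.
   The letter x shifts t, and y^{+-1} inserts x_{1-t}^{+-1} into Z, moving it
   past x_a^e by x_a^e x_b^{+-1} = x_b^{+-1} x_{a+-1}^e. Both relators act
   trivially, so the action factors through F. Spelling out a reduced state
   gives a word of N, and spelling out the state reached by a word of N gives
   that word back. So an edge e_{g,a} with g in N lies on T iff g a is in N
   or g ends with a^-1. The only way g a can fail to be in N is through a
   forbidden subword y^{+-1} x^{i_0} y^{+-1} at the end of g. *)

From HB Require Import structures.
From mathcomp Require Import all_boot all_order all_algebra zify.
From Stdlib Require Import Setoid Morphisms.
Import Order.TTheory GRing.Theory Num.Theory.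
Set Implicit Arguments. Unset Strict Implicit. Unset Printing Implicit Defensive.

Add Parametric Relation : word weq
  reflexivity proved by weq_refl
  symmetry proved by weq_sym
  transitivity proved by weq_trans as weq_rel.

#[local] Hint Resolve weq_refl : core.

Lemma weq_catr u v w : weq u v -> weq (u ++ w) (v ++ w).
Proof.
elim=> {u v}.
- by [].
- by move=> u v _; symmetry.
- by move=> u v w' _ -> _.
- by move=> u a v; rewrite -!catA; apply: weq_free.
- by move=> u v; rewrite -!catA; apply: weq_rel1.
- by move=> u v; rewrite -!catA; apply: weq_rel2.
Qed.

Lemma weq_catl u v w : weq u v -> weq (w ++ u) (w ++ v).
Proof.
elim=> {u v}.
- by [].
- by move=> u v _; symmetry.
- by move=> u v w' _ -> _.
- by move=> u a v; rewrite !catA; apply: weq_free.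
- by move=> u v; rewrite !(catA w u); apply: weq_rel1.
- by move=> u v; rewrite !(catA w u); apply: weq_rel2.
Qed.

#[export] Instance cat_weq_proper : Proper (weq ==> weq ==> weq) (@cat letter).
Proof. by move=> u u' Hu v v' Hv; rewrite (weq_catr v Hu) (weq_catl u' Hv). Qed.

#[export] Instance cons_weq_proper a : Proper (weq ==> weq) (cons a).
Proof. by move=> u v; apply: (weq_catl [:: a]). Qed.

#[export] Instance rcons_weq_proper : Proper (weq ==> eq ==> weq) (@rcons letter).
Proof. by move=> u v Huv a _ <-; rewrite -!cats1 Huv. Qed.

Lemma linvK : involutive linv. Proof. by case. Qed.

Lemma winv_cat u v : winv (u ++ v) = winv v ++ winv u.
Proof. by rewrite /winv map_cat rev_cat. Qed.

Lemma winv_cons a w : winv (a :: w) = rcons (winv w) (linv a).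
Proof. by rewrite /winv /= rev_cons. Qed.

Lemma winvK : involutive winv.
Proof. by move=> w; rewrite /winv map_rev revK (mapK linvK). Qed.

Lemma weq_free_r u a : weq (u ++ [:: a; linv a]) u.
Proof. by have := weq_free u a [::]; rewrite cats0. Qed.

Lemma weq_catV w : weq (w ++ winv w) [::].
Proof.
elim: w => [|a w IH] //=.
by rewrite winv_cons -cats1 catA IH; apply: (weq_free_r [::]).
Qed.

Lemma weq_Vcat w : weq (winv w ++ w) [::].
Proof. by have := weq_catV (winv w); rewrite winvK. Qed.

Lemma weq_cancel_l p u v : weq (p ++ u) (p ++ v) -> weq u v.
Proof.
move=> H; transitivity (winv p ++ p ++ u); first by rewrite catA weq_Vcat.
by rewrite H catA weq_Vcat.
Qed.

Lemma weq_cancel_r p u v : weq (u ++ p) (v ++ p) -> weq u v.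
Proof.
move=> H; transitivity (u ++ p ++ winv p); first by rewrite weq_catV cats0.
by rewrite catA H -catA weq_catV cats0.
Qed.

Lemma weq_winv u v : weq u v -> weq (winv u) (winv v).
Proof.
move=> H; apply: (@weq_cancel_l u).
by rewrite weq_catV [in X in weq _ X]H weq_catV.
Qed.

Local Open Scope ring_scope.

Lemma nseqSr n (l : letter) : nseq n.+1 l = rcons (nseq n l) l.
Proof. by elim: n => //= n <-. Qed.

Lemma xpow_nat (n : nat) : xpow n = nseq n xl. Proof. by []. Qed.

Lemma xpow_Negz (n : nat) : xpow (Negz n) = nseq n.+1 xi. Proof. by []. Qed.

Lemma xpowN_nat (n : nat) : xpow (- n%:Z) = nseq n xi. Proof. by case: n. Qed.

Lemma xpow_nonneg m : 0 <= m -> xpow m = nseq `|m|%N xl.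
Proof. by rewrite /xpow => ->. Qed.

Lemma xpowS m : weq (xpow (m + 1)) (rcons (xpow m) xl).
Proof.
case: m => n.
  have -> : n%:Z + 1 = n.+1 by lia.
  by rewrite xpow_nat nseqSr.
have -> : Negz n + 1 = - n%:Z by lia.
by rewrite xpow_Negz nseqSr -!cats1 -catA weq_free_r xpowN_nat.
Qed.

Lemma xpowB1 m : weq (xpow (m - 1)) (rcons (xpow m) xi).
Proof.
case: m => [[|n]|n] //.
  have -> : n.+1%:Z - 1 = n by lia.
  by rewrite !xpow_nat nseqSr -!cats1 -catA weq_free_r.
have -> : Negz n - 1 = Negz n.+1 by lia.
by rewrite !xpow_Negz nseqSr.
Qed.

Lemma xpowD m k : weq (xpow m ++ xpow k) (xpow (m + k)).
Proof.
have xpowDn n : weq (xpow m ++ nseq n xl) (xpow (m + n%:Z)).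
  elim: n => [|n IH]; first by rewrite addr0 cats0.
  rewrite nseqSr -rcons_cat IH -xpowS.
  by have -> : m + n%:Z + 1 = m + n.+1%:Z by lia.
have xpowBn n : weq (xpow m ++ nseq n xi) (xpow (m - n%:Z)).
  elim: n => [|n IH]; first by rewrite subr0 cats0.
  rewrite nseqSr -rcons_cat IH -xpowB1.
  by have -> : m - n%:Z - 1 = m - n.+1%:Z by lia.
case: k => n; first exact: xpowDn.
by rewrite xpow_Negz xpowBn; have -> : m - n.+1%:Z = m + Negz n by lia.
Qed.

Lemma winv_xpow m : winv (xpow m) = xpow (- m).
Proof.
have winv_nseq n l : winv (nseq n l) = nseq n (linv l).
  by rewrite /winv map_nseq rev_nseq.
case: m => [[|n]|n] //; first by rewrite xpow_nat winv_nseq.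
by rewrite xpow_Negz winv_nseq; have -> : - Negz n = n.+1 by lia.
Qed.

(* A subword y^{+-1} x^i y^d is forbidden in N exactly when i >= [ybound d]. *)
Definition ybound (d : bool) : nat := if d then 1 else 2.

Definition xgen (e : bool) (k : int) : word := xpow (1 - k) ++ ylet e :: xpow (k - 1).
Definition xconj (d : int) (w : word) : word := xpow (- d) ++ w ++ xpow d.
Definition wcommute (u v : word) : Prop := weq (u ++ v) (v ++ u).
Definition xyV : word := [:: xl; yi].

Lemma winv_xgen e k : winv (xgen e k) = xgen (~~ e) k.
Proof.
rewrite /xgen winv_cat winv_cons winv_xpow -cats1 -catA winv_xpow.
have -> : - (k - 1) = 1 - k by lia.
have -> : - (1 - k) = k - 1 by lia.
by case: e.
Qed.

Lemma xconj_cat d u v : weq (xconj d (u ++ v)) (xconj d u ++ xconj d v).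
Proof.
rewrite /xconj -!catA (catA (xpow d) (xpow (- d))) xpowD.
by have -> : d + - d = 0 by lia.
Qed.

Lemma xconj_xgen d e k : weq (xconj d (xgen e k)) (xgen e (k + d)).
Proof.
rewrite /xconj /xgen -catA catA xpowD /= xpowD.
have -> : - d + (1 - k) = 1 - (k + d) by lia.
by have -> : k - 1 + d = k + d - 1 by lia.
Qed.

Lemma wcommute_of_comm u v : weq (wcomm u v) [::] -> wcommute u v.
Proof.
move=> H; rewrite /wcommute.
transitivity (v ++ u ++ wcomm u v); last by rewrite H cats0.
by rewrite /wcomm (catA u (winv u)) weq_catV /= (catA v (winv v)) weq_catV.
Qed.

Lemma wcommute_weq u v v' : weq v v' -> wcommute u v -> wcommute u v'.
Proof. by rewrite /wcommute => ->. Qed.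

Lemma wcommute_cat u v w : wcommute u v -> wcommute u w -> wcommute u (v ++ w).
Proof. by rewrite /wcommute => Hv Hw; rewrite catA Hv -catA Hw catA. Qed.

Lemma wcommute_winv u v : wcommute u v -> wcommute u (winv v).
Proof.
rewrite /wcommute => H.
apply: (@weq_cancel_l v); apply: (@weq_cancel_r v).
rewrite !catA weq_catV /= -catA weq_Vcat cats0.
by symmetry.
Qed.

(* Up to conversion, relator1 and relator2 are [wcomm xyV (xgen true 2)] and
   [wcomm xyV (xgen true 3)]. *)
Lemma xyV_xgen2 : wcommute xyV (xgen true 2).
Proof. by apply: wcommute_of_comm; rewrite -(cats0 (wcomm _ _)); apply: (weq_rel1 [::]). Qed.

Lemma xyV_xgen3 : wcommute xyV (xgen true 3).
Proof. by apply: wcommute_of_comm; rewrite -(cats0 (wcomm _ _)); apply: (weq_rel2 [::]). Qed.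

Lemma yconj_of_commute w : wcommute xyV w -> weq ([:: yi] ++ w ++ [:: yl]) (xconj 1 w).
Proof.
move=> H.
transitivity ([:: xi] ++ (xyV ++ w) ++ [:: yl]); first by rewrite -catA; symmetry; apply: (weq_free [::] xi).
rewrite H /xconj -catA /=.
by have := weq_free (xi :: w ++ [:: xl]) yi [::]; rewrite cats0 /= -!catA.
Qed.

Lemma xgen_conj_shift j : weq (xgen false j ++ xgen true (j + 1) ++ xgen true j) (xgen true (j + 2)).
Proof.
have base : weq (xgen false 1 ++ xgen true 2 ++ xgen true 1) (xgen true 3).
  by rewrite -[xgen true 3](xconj_xgen 1 true 2); apply: yconj_of_commute xyV_xgen2.
have : weq (xconj (j - 1) (xgen false 1 ++ xgen true 2 ++ xgen true 1))
           (xconj (j - 1) (xgen true 3)) by rewrite /xconj base.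
rewrite (xconj_cat _ (xgen false 1)) (xconj_cat _ (xgen true 2)) !xconj_xgen.
have -> : 1 + (j - 1) = j by lia.
have -> : 2 + (j - 1) = j + 1 by lia.
have -> : 3 + (j - 1) = j + 2 by lia.
by move <-.
Qed.

Lemma xyV_xgen (n : nat) : (2 <= n)%N -> wcommute xyV (xgen true n).
Proof.
elim/ltn_ind: n => -[|[|[|[|n]]]] IH Hn //; first exact: xyV_xgen2; first exact: xyV_xgen3.
have -> : n.+4%:Z = n.+2%:Z + 2 by lia.
apply: (wcommute_weq (xgen_conj_shift n.+2)).
rewrite -(winv_xgen true); apply: wcommute_cat; first by apply/wcommute_winv/IH.
apply: wcommute_cat; last exact: IH.
have -> : n.+2%:Z + 1 = n.+3 by lia.
exact: IH.
Qed.

Lemma yconj_xgen e k : 2 <= k -> weq ([:: yi] ++ xgen e k ++ [:: yl]) (xgen e (k + 1)).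
Proof.
move=> Hk.
have Ht : weq ([:: yi] ++ xgen true k ++ [:: yl]) (xgen true (k + 1)).
  case: k Hk => [n|//] Hn.
  by rewrite (yconj_of_commute (xyV_xgen _)) ?xconj_xgen //; lia.
case: e => //.
by have := weq_winv Ht; rewrite (winv_cat [:: yi]) (winv_cat (xgen true k)) !winv_xgen.
Qed.

Definition sgnb (d : bool) : int := if d then 1 else -1.

Lemma y_exchange e d m : (ybound d)%:Z <= m ->
  weq (ylet e :: xpow m ++ [:: ylet d])
      (xpow m ++ ylet d :: xpow (- m - sgnb d) ++ ylet e :: xpow (m + sgnb d)).
Proof.
move=> Hm; apply: (@weq_cancel_l (xpow (- m))).
have -> : xpow (- m) ++ ylet e :: xpow m ++ [:: ylet d] = xgen e (m + 1) ++ [:: ylet d].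
  rewrite /xgen -catA /=.
  have -> : 1 - (m + 1) = - m by lia.
  by have -> : m + 1 - 1 = m by lia.
have -> : weq (xpow (- m) ++ xpow m ++ ylet d :: xpow (- m - sgnb d) ++ ylet e :: xpow (m + sgnb d))
           ([:: ylet d] ++ xgen e (m + 1 + sgnb d)).
  rewrite catA xpowD.
  have -> : - m + m = 0 by lia.
  rewrite /xgen /=.
  have -> : 1 - (m + 1 + sgnb d) = - m - sgnb d by lia.
  by have -> : m + 1 + sgnb d - 1 = m + sgnb d by lia.
case: d Hm => /= Hm.
- apply: (@weq_cancel_l [:: yi]).
  rewrite (yconj_xgen e (_ : 2 <= m + 1)); last by lia.
  by symmetry; apply: (weq_free [::] yi).
- apply: (@weq_cancel_r [:: yl]).
  have -> : m + 1 - 1 = m by lia.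
  by rewrite -catA /= (weq_free_r _ yi) -(yconj_xgen e Hm).
Qed.

(** * The normal forms N *)

Lemma inNP w : inN w <->
  (forall u a v, w <> u ++ a :: linv a :: v) /\
  (forall u e d i v, (ybound d <= i)%N -> w <> u ++ ylet e :: nseq i xl ++ ylet d :: v).
Proof.
split=> [[H1 [H2 H3]]|[H1 H]]; split=> //.
  move=> u e [] i v Hi; first exact: H2.
  by case: i Hi => // i; apply: H3.
by split=> u e i v Hi; [apply: (H u e true) | apply: (H u e false)].
Qed.

Lemma inN_prefix u v : inN (u ++ v) -> inN u.
Proof.
move=> /inNP [H1 H2]; apply/inNP; split.
  by move=> p a q E; apply: (H1 p a (q ++ v)); rewrite E -catA.
by move=> p e d i q Hi E; apply: (H2 p e d i (q ++ v) Hi); rewrite E -catA /= -catA.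
Qed.

Lemma rcons_split (w : word) a (u p v : word) : rcons w a = u ++ p ++ v -> p <> [::] ->
  (exists p', p = rcons p' a /\ w = u ++ p') \/ (exists v', w = u ++ p ++ v').
Proof.
case/lastP: v => [|v c].
  rewrite cats0; case/lastP: p => [|p c] // + _; rewrite -rcons_cat.
  by move=> /rcons_inj [-> ->]; left; exists p.
by rewrite -!rcons_cat => /rcons_inj [-> _] _; right; exists v.
Qed.

Lemma inN_rcons w a : inN w -> (forall u, w <> rcons u (linv a)) ->
  (forall d u e i, a = ylet d -> (ybound d <= i)%N -> w <> u ++ ylet e :: nseq i xl) ->
  inN (rcons w a).
Proof.
move=> /inNP [H1 H2] Hcancel Hforbid; apply/inNP; split.
- move=> u b v E.
  have E' : rcons w a = u ++ [:: b; linv b] ++ v by rewrite E.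
  case: (rcons_split E') => // [[p' [Ep Ew]]|[v' Ew]]; last by apply: (H1 u b v'); rewrite Ew.
  change (rcons [:: b] (linv b) = rcons p' a) in Ep.
  by case/rcons_inj: Ep => Ep Ea; apply: (Hcancel u); rewrite Ew -Ep -Ea linvK cats1.
- move=> u e d i v Hi E.
  have E' : rcons w a = u ++ (ylet e :: nseq i xl ++ [:: ylet d]) ++ v by rewrite E /= -catA.
  case: (rcons_split E') => // [[p' [+ Ew]]|[v' Ew]].
    rewrite -cat_cons cats1 => /rcons_inj [Ep Ea].
    by apply: (Hforbid d u e i (esym Ea) Hi); rewrite Ew -Ep.
  by apply: (H2 u e d i v' Hi); rewrite Ew /= -catA.
Qed.

Lemma last_xpow z m : last z (xpow m) = if 0 < m then xl else if m < 0 then xi else z.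
Proof. by case: m => [[|n]|n] //; rewrite ?xpow_nat ?xpow_Negz nseqSr last_rcons. Qed.

Lemma rcons_y_xpow Q e m u c : Q ++ ylet e :: xpow m = rcons u c ->
  c = if 0 < m then xl else if m < 0 then xi else ylet e.
Proof. by move=> /(congr1 (last c)); rewrite last_rcons last_cat /= last_xpow => ->. Qed.

Lemma ylet_notin_xpow e m : ylet e \notin xpow m.
Proof. by rewrite /xpow; case: ifP => _; rewrite mem_nseq; case: e; rewrite andbF. Qed.

Lemma xpow_neq_ylet m u e v : xpow m <> u ++ ylet e :: v.
Proof. by move=> E; have := ylet_notin_xpow e m; rewrite E mem_cat mem_head orbT. Qed.

Lemma inN_xpow m : inN (xpow m).
Proof.
apply/inNP; split=> [u a v E|u e d i v _]; last exact: xpow_neq_ylet.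
have Ha : a \in xpow m by rewrite E mem_cat mem_head orbT.
have Hb : linv a \in xpow m by rewrite E mem_cat !inE eqxx !orbT.
by move: Ha Hb; rewrite /xpow; case: ifP => _; rewrite !mem_nseq => /andP [_ /eqP ->] /andP [].
Qed.

Lemma inN_rcons_xpow_y m d : inN (rcons (xpow m) (ylet d)).
Proof.
apply: inN_rcons (inN_xpow m) _ _ => [u Eu | ? ? ? ? _ _]; last exact: xpow_neq_ylet.
move: (congr1 (last xl) Eu) => {Eu}; rewrite last_rcons last_xpow.
by case: ifP => _; [|case: ifP => _]; case: d.
Qed.

Lemma inN_cat_xpow W e m : inN (rcons W (ylet e)) -> inN (W ++ ylet e :: xpow m).
Proof.
move=> H.
have ext l n : l = xl \/ l = xi -> inN (W ++ ylet e :: nseq n l).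
  move=> Hl; elim: n => [|n IH]; first by rewrite cats1.
  rewrite nseqSr -rcons_cons -rcons_cat.
  apply: inN_rcons IH _ _ => [u|d u e' i Ed _]; last by case: Hl Ed => ->; case: d.
  case: n => [|n]; rewrite ?nseqSr -?rcons_cons -?rcons_cat ?cats1 => /rcons_inj [_].
    by case: Hl => ->; case: (e).
  by case: Hl => ->.
by rewrite /xpow; case: ifP => _; apply: ext; [left|right].
Qed.

Lemma y_xpow_suffix Q e m u e' i :
  Q ++ ylet e :: xpow m = u ++ ylet e' :: nseq i xl -> (0 < i)%N -> m = i.
Proof.
have nseq_y n j (s s' : word) e1 e2 :
    nseq n xl ++ ylet e1 :: s = nseq j xl ++ ylet e2 :: s' -> n = j.
  elim: n j => [|n IH] [|j] //=; [by case: (e1) | by case: (e2) | by case=> /IH ->].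
move=> /(congr1 rev); rewrite !rev_cat !rev_cons !cat_rcons rev_nseq.
case: m => n; first by rewrite xpow_nat rev_nseq => /nseq_y ->.
by rewrite xpow_Negz rev_nseq; case: i.
Qed.

Lemma linv_ylet e : linv (ylet e) = ylet (~~ e). Proof. by case: e. Qed.

Lemma ylet_inj : injective ylet. Proof. by case; case. Qed.

Lemma inN_rcons_y Q e m d : inN (Q ++ ylet e :: xpow m) ->
  inN (rcons (Q ++ ylet e :: xpow m) (ylet d)) <-> m < (ybound d)%:Z /\ ~ (m = 0 /\ e = ~~ d).
Proof.
move=> HN; split.
  move=> /inNP [Hcancel Hforbid]; split.
    rewrite ltNge; apply/negP => Hm.
    apply: (Hforbid Q e d `|m|%N [::]); first by lia.
    by rewrite xpow_nonneg -?cats1 -?catA //; lia.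
  move=> [Em Ee]; apply: (Hcancel Q (ylet e) [::]).
  by rewrite Em Ee linv_ylet negbK -cats1 -catA.
move=> [Hm Hcancel]; apply: inN_rcons HN _ _ => [u /rcons_y_xpow | d' u e' i /ylet_inj <- Hi].
  by rewrite linv_ylet; case: (ltrgtP 0 m) => [||Em /ylet_inj Ee]; [case: (d)..|apply: Hcancel].
have Hi0 : (0 < i)%N by apply: leq_trans Hi; case: (d).
by move=> /y_xpow_suffix /(_ Hi0) Em; move: Hm; rewrite Em; lia.
Qed.

(** * Reduced states and the action of words *)

(* A symbol (k, e) stands for [xgen e k]. A state (Z, t) stands for [spell Z t],
   the product of the symbols of Z from right to left (the head of Z is the
   rightmost factor) followed by x^t. [push Z q] multiplies by q on the right:
   q cancels the head p of Z ([cancelb]) or moves past it ([crossb], see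
   [y_exchange]). *)
Definition sym := (int * bool)%type.

Definition cancelb (p q : sym) : bool := (p.1 == q.1) && (p.2 != q.2).
Definition crossb (p q : sym) : bool := (ybound q.2)%:Z <= p.1 - q.1.
Definition allowed (p q : sym) : bool := ~~ cancelb p q && ~~ crossb p q.

Fixpoint push (Z : seq sym) (q : sym) : seq sym :=
  match Z with
  | [::] => [:: q]
  | p :: Z' => if cancelb p q then Z'
               else if crossb p q then (p.1 + sgnb q.2, p.2) :: push Z' q
               else q :: Z
  end.

Fixpoint reduced (Z : seq sym) : bool :=
  match Z with
  | [::] => true
  | q :: Z' => reduced Z' && (if Z' is p :: _ then allowed p q else true)
  end.

Ltac symsimpl := rewrite /allowed /cancelb /crossb /sgnb /ybound /=.

Lemma push_reduced_cross Z p q : reduced (p :: Z) -> crossb p q ->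
  reduced ((p.1 + sgnb q.2, p.2) :: push Z q).
Proof.
case: q => b d.
elim: Z p => [|c Z IH] [a e] /=; first by case: e; case: d; symsimpl; lia.
case/andP=> Hr Hca Hx.
case: ifP => Hc.
  clear IH; move: Hr; case: Z => [|h Z] //= /andP [-> Hh] /=.
  clear -Hh Hca Hc Hx; move: Hh Hca Hc Hx; case: c h => [c g] [k f].
  by case: d; case: e; case: g; case: f; symsimpl; lia.
case: ifP => Hx2.
  rewrite (IH c Hr Hx2) andTb.
  clear -Hca Hx; move: Hca Hx; case: c => c g.
  by case: d; case: e; case: g; symsimpl; lia.
rewrite /= Hr /allowed Hc Hx2 /=.
by clear -Hx; move: Hx; case: d; case: e; symsimpl; lia.
Qed.

Lemma push_reduced Z q : reduced Z -> reduced (push Z q).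
Proof.
case: Z => [|p Z] //= Hr.
case: ifP => Hc; first by case: Z Hr => //= c Z /andP [].
case: ifP => Hx; first exact: push_reduced_cross.
by rewrite /= Hr /allowed Hc Hx.
Qed.

Lemma push_pushV Z q : reduced Z -> push (push Z q) (q.1, ~~ q.2) = Z.
Proof.
case: q => b d.
elim: Z => [|[a e] Z IH] /=; first by rewrite /cancelb /= eqxx; case: d.
case/andP => Hr Hal.
case: ifP => Hc.
  have [Ea Ee] : a = b /\ e = ~~ d.
    by move: Hc; rewrite /cancelb /= => /andP [/eqP -> ]; case: (d); case: (e).
  subst a e.
  case: Z Hr Hal {IH} => [|c Z] //= _.
  by rewrite /allowed => /andP [/negbTE -> /negbTE ->].
case: ifP => Hx /=; last by rewrite /cancelb /= eqxx; case: (d).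
have -> : cancelb (a + sgnb d, e) (b, ~~ d) = false by move: Hx; case: (d); case: (e); symsimpl; lia.
have -> : crossb (a + sgnb d, e) (b, ~~ d) = true by move: Hx; case: (d); case: (e); symsimpl; lia.
by rewrite IH //; congr ((_, _) :: _); case: (d); rewrite /sgnb /=; lia.
Qed.

Ltac decide_if :=
  match goal with
  | |- context [if ?b then _ else _] =>
      let H := fresh in
      first [ have H : b = true by symsimpl; lia
            | have H : b = false by symsimpl; lia ];
      rewrite H /=; clear H
  end.

(* The pushed symbols form the relator x_c x_{c+d+1}^-1 x_c^-1 x_{c+d} of the
   infinite presentation of F. *)
Lemma push_relator Z c d : 1 <= d -> reduced Z ->
  push (push (push (push Z (c, true)) (c + d + 1, false)) (c, false)) (c + d, true) = Z.
Proof.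
move=> Hd; elim: Z => [|[a e] Z IH] /=; first by repeat decide_if.
case/andP => Hr Hal.
have Hinv : push (push Z (c, true)) (c, false) = Z by exact: (push_pushV (c, true) Hr).
have [HA|[HB|HC]] : (a = c /\ e = false) \/ (a <= c /\ ~ (a = c /\ e = false)) \/ c < a.
  by case: (e); lia.
- case: HA => ? ?; subst a e.
  repeat decide_if.
  case: Z Hr Hal {IH Hinv} => [|[h f] Z] /=; first by move=> _ _; repeat decide_if.
  by move=> _; case: f; symsimpl => Hal; repeat decide_if.
- by move: HB; case: (e) => HB; repeat decide_if.
have [C1|[C2|C3]] : c + d + 1 < a \/ (a = c + d /\ e = true) \/
                    (a <= c + d + 1 /\ ~ (a = c + d /\ e = true)).
  by case: (e); lia.
- move: C1 HC; case: (e) => C1 HC; repeat decide_if; rewrite IH //; congr ((_, _) :: _); lia.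
- case: C2 => ? ?; subst a e.
  repeat decide_if.
  rewrite Hinv.
  case: Z Hr Hal {IH Hinv} => [|[h f] Z] /=; first by move=> _ _; repeat decide_if.
  by move=> _; case: f; symsimpl => Hal; repeat decide_if.
- move: C3 HC; case: (e) => C3 HC; repeat decide_if; rewrite Hinv //; repeat decide_if;
    congr ((_, _) :: _); lia.
Qed.

Definition state := (seq sym * int)%type.

Definition act (s : state) (a : letter) : state :=
  match a with
  | xl => (s.1, s.2 + 1)
  | xi => (s.1, s.2 - 1)
  | yl => (push s.1 (1 - s.2, true), s.2)
  | yi => (push s.1 (1 - s.2, false), s.2)
  end.

Definition actw (s : state) (w : word) : state := foldl act s w.

Lemma act_ylet s d : act s (ylet d) = (push s.1 (1 - s.2, d), s.2).
Proof. by case: d. Qed.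

Lemma act_reduced s a : reduced s.1 -> reduced (act s a).1.
Proof. by case: a => //= H; apply: push_reduced. Qed.

Lemma actw_reduced s w : reduced s.1 -> reduced (actw s w).1.
Proof. by elim: w s => //= a w IH s H; apply/IH/act_reduced. Qed.

Lemma actw_cat s u v : actw s (u ++ v) = actw (actw s u) v.
Proof. exact: foldl_cat. Qed.

Lemma act_linv s a : reduced s.1 -> act (act s a) (linv a) = s.
Proof.
case: s => Z t /= H; case: a => /=.
- by congr pair; lia.
- by congr pair; lia.
- by rewrite (push_pushV (1 - t, true) H).
- by rewrite (push_pushV (1 - t, false) H).
Qed.

Lemma actw_xpow s m : actw s (xpow m) = (s.1, s.2 + m).
Proof.
case: m => n; [rewrite xpow_nat | rewrite NegzE xpowN_nat; move: n.+1 => {}n];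
  by elim: n s => [|n IH] [Z t] /=; rewrite ?IH /=; congr pair; lia.
Qed.

Lemma actw_xgen s e k : actw s (xgen e k) = (push s.1 (k - s.2, e), s.2).
Proof.
rewrite /xgen actw_cat /= actw_xpow /= act_ylet /= actw_xpow /=.
by congr (push _ (_, _), _); lia.
Qed.

Lemma actw_commutator s k : 2 <= k -> reduced s.1 -> actw s (wcomm xyV (xgen true k)) = s.
Proof.
case: s => Z t Hk; rewrite [(_, _).1]/= => H.
rewrite /wcomm winv_xgen (actw_cat _ (winv xyV)) (actw_cat _ (xgen false k)).
rewrite (actw_cat _ xyV) !actw_xgen /=.
rewrite -[in RHS](push_relator (1 - t) (_ : 1 <= k - 1) H); last by lia.
congr (_, _); last by lia.
by do 3 (congr push; last by congr (_, _); lia).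
Qed.

Lemma actw_weq u v : weq u v -> forall s, reduced s.1 -> actw s u = actw s v.
Proof.
have Hrel k w1 w2 s : 2 <= k -> reduced s.1 ->
    actw s (w1 ++ wcomm xyV (xgen true k) ++ w2) = actw s (w1 ++ w2).
  move=> Hk Hs; rewrite actw_cat (actw_cat _ (wcomm _ _)) actw_commutator -?actw_cat //.
  exact: actw_reduced.
elim=> {u v} //.
- by move=> u v _ IH s Hs; rewrite IH.
- by move=> u v w _ IH1 _ IH2 s Hs; rewrite IH1 // IH2.
- move=> u a v s Hs.
  by rewrite actw_cat [in RHS]actw_cat /= act_linv //; apply: actw_reduced.
- by move=> u v s; apply: (Hrel 2).
- by move=> u v s; apply: (Hrel 3).
Qed.

(** * Spelling states as normal forms *)

Fixpoint spell (Z : seq sym) (t : int) : word :=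
  match Z with
  | [::] => xpow t
  | (k, e) :: Z' => spell Z' (1 - k) ++ ylet e :: xpow (t - 1 + k)
  end.

Lemma spell_xpow Z t m : weq (spell Z t ++ xpow m) (spell Z (t + m)).
Proof.
case: Z => [|[k e] Z] /=; first exact: xpowD.
rewrite -catA /= xpowD.
by have -> : t - 1 + k + m = t + m - 1 + k by lia.
Qed.

Lemma spell_cross Z k e b d t : (ybound d)%:Z <= k - b ->
  let k' := k + sgnb d in
  weq (spell ((k, e) :: Z) t ++ xpow (1 - b - t) ++ ylet d :: xpow (t - 1 + b))
      (spell Z (1 - k') ++ xpow (1 - b - (1 - k')) ++ ylet d :: xpow (1 - k' - 1 + b)
         ++ ylet e :: xpow (t - 1 + k')).
Proof.
move=> Hm k' /=; rewrite {}/k'.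
transitivity (spell Z (1 - k) ++ (ylet e :: xpow (k - b) ++ [:: ylet d]) ++ xpow (t - 1 + b)).
  rewrite -!catA /= -!catA (catA (xpow (t - 1 + k))) xpowD.
  by have -> : t - 1 + k + (1 - b - t) = k - b by lia.
rewrite y_exchange //.
transitivity (spell Z (1 - (k + sgnb d)) ++ xpow (sgnb d) ++ xpow (k - b) ++ ylet d ::
   xpow (- (k - b) - sgnb d) ++ ylet e :: xpow (k - b + sgnb d) ++ xpow (t - 1 + b)).
  rewrite (catA (spell Z _) (xpow (sgnb d))) spell_xpow.
  have -> : 1 - (k + sgnb d) + sgnb d = 1 - k by lia.
  by rewrite -!catA /= -?catA /= -?catA /= -?catA.
rewrite (catA (xpow (sgnb d))) !xpowD.
have -> : sgnb d + (k - b) = 1 - b - (1 - (k + sgnb d)) by lia.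
have -> : - (k - b) - sgnb d = 1 - (k + sgnb d) - 1 + b by lia.
by have -> : k - b + sgnb d + (t - 1 + b) = t - 1 + (k + sgnb d) by lia.
Qed.

Lemma spell_push Z t b d : reduced Z ->
  weq (spell Z t ++ xpow (1 - b - t) ++ ylet d :: xpow (t - 1 + b)) (spell (push Z (b, d)) t).
Proof.
elim: Z t => [|[k e] Z IH] t /=.
  move=> _; rewrite catA xpowD.
  by have -> : t + (1 - b - t) = 1 - b by lia.
case/andP => Hr Hal.
case: ifP => Hc.
  have [Ek Ee] : k = b /\ e = ~~ d.
    by move: Hc; rewrite /cancelb /= => /andP [/eqP -> ]; case: (d); case: (e).
  subst k e.
  rewrite -catA /= (catA (xpow (t - 1 + b))) xpowD.
  have -> : t - 1 + b + (1 - b - t) = 0 by lia.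
  have := weq_free (spell Z (1 - b)) (ylet (~~ d)) (xpow (t - 1 + b)).
  rewrite linv_ylet negbK /= => ->; rewrite spell_xpow.
  by have -> : 1 - b + (t - 1 + b) = t by lia.
case: ifP => Hx /=.
  have := @spell_cross Z k e b d t Hx; rewrite /= -!catA /= => ->.
  by rewrite -IH // -!catA.
rewrite -!catA /= (catA (xpow (t - 1 + k))) xpowD.
by have -> : t - 1 + k + (1 - b - t) = 1 - b - 1 + k by lia.
Qed.

Lemma allowedP k e b d : allowed (k, e) (b, d) <-> k - b < (ybound d)%:Z /\ ~ (k - b = 0 /\ e = ~~ d).
Proof. by rewrite /allowed /cancelb /crossb /=; case: e; case: d => /=; lia. Qed.

Lemma spell_inN Z t : reduced Z -> inN (spell Z t).
Proof.
elim: Z t => [|[k e] Z IH] t /=; first by move=> _; apply: inN_xpow.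
case/andP => Hr Hal; apply: inN_cat_xpow.
case: Z Hr Hal IH => [|[k' e'] Z] Hr Hal IH; first exact: inN_rcons_xpow_y.
apply/(inN_rcons_y _ (IH (1 - k) Hr)).
have -> : 1 - k - 1 + k' = k' - k by lia.
by apply/allowedP.
Qed.

Lemma spell_act Z t a : reduced Z ->
  weq (rcons (spell Z t) a) (spell (act (Z, t) a).1 (act (Z, t) a).2).
Proof.
move=> HZ.
have Hy d : weq (rcons (spell Z t) (ylet d)) (spell (push Z (1 - t, d)) t).
  rewrite -spell_push //.
  have -> : 1 - (1 - t) - t = 0 by lia.
  have -> : t - 1 + (1 - t) = 0 by lia.
  by rewrite cats1.
case: a => /=; [| | exact: (Hy true) | exact: (Hy false)].
- by rewrite -cats1 -[[:: xl]]/(xpow 1) spell_xpow.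
- by rewrite -cats1 -[[:: xi]]/(xpow (-1)) spell_xpow.
Qed.

Lemma spell_split Z : exists Q m0, forall t, spell Z t = Q ++ xpow (m0 + t).
Proof.
case: Z => [|[k e] Z]; first by exists [::], 0 => t; rewrite add0r.
exists (rcons (spell Z (1 - k)) (ylet e)), (k - 1) => t.
by rewrite -cats1 -catA /=; have -> : k - 1 + t = t - 1 + k by lia.
Qed.

Lemma xpowS_inN Q m : inN (rcons (Q ++ xpow m) xl) -> xpow (m + 1) = rcons (xpow m) xl.
Proof.
case: m => n /inNP [Hcancel _].
  have -> : n%:Z + 1 = n.+1 by lia.
  by rewrite xpow_nat nseqSr.
by case: (Hcancel (Q ++ nseq n xi) xi [::]); rewrite xpow_Negz nseqSr -!cats1 -!catA.
Qed.

Lemma xpowB1_inN Q m : inN (rcons (Q ++ xpow m) xi) -> xpow (m - 1) = rcons (xpow m) xi.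
Proof.
case: m => [[|n]|n] /inNP [Hcancel _] //.
  by case: (Hcancel (Q ++ nseq n xl) xl [::]); rewrite xpow_nat nseqSr -!cats1 -!catA.
have -> : Negz n - 1 = Negz n.+1 by lia.
by rewrite !xpow_Negz nseqSr.
Qed.

Lemma spell_act_inN Z t a : reduced Z -> inN (rcons (spell Z t) a) ->
  spell (act (Z, t) a).1 (act (Z, t) a).2 = rcons (spell Z t) a.
Proof.
move=> HZ.
have [Q [m0 E]] := spell_split Z.
have spell_cons d : spell ((1 - t, d) :: Z) t = rcons (spell Z t) (ylet d).
  rewrite /= -cats1.
  have -> : 1 - (1 - t) = t by lia.
  by have -> : t - 1 + (1 - t) = 0 by lia.
have Hy d : inN (rcons (spell Z t) (ylet d)) -> spell (push Z (1 - t, d)) t = rcons (spell Z t) (ylet d).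
  case: Z HZ {E} spell_cons => [|[k e] Z] HZ spell_cons HN; first exact: spell_cons.
  have : allowed (k, e) (1 - t, d).
    apply/allowedP; have -> : k - (1 - t) = t - 1 + k by lia.
    have HQ : inN (spell ((k, e) :: Z) t) by apply: (@inN_prefix _ [:: ylet d]); rewrite cats1.
    exact/(inN_rcons_y _ HQ).
  by rewrite /allowed /= => /andP [/negbTE -> /negbTE ->]; apply: spell_cons.
case: a => /=; [| | exact: (Hy true) | exact: (Hy false)]; rewrite !E.
- by move=> /xpowS_inN; rewrite addrA rcons_cat => <-.
- by move=> /xpowB1_inN; rewrite addrA rcons_cat => <-.
Qed.

Definition nf (w : word) : word := let s := actw ([::], 0) w in spell s.1 s.2.

Lemma nf_rcons w a :
  nf (rcons w a) = let s := actw ([::], 0) w in spell (act s a).1 (act s a).2.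
Proof. by rewrite /nf /actw foldl_rcons. Qed.

Lemma nf_inN w : inN (nf w).
Proof. exact/spell_inN/actw_reduced. Qed.

Lemma nf_weq w : weq w (nf w).
Proof.
elim/last_ind: w => [|w a IH] //.
transitivity (rcons (nf w) a); first by rewrite -IH.
rewrite nf_rcons /nf; have := actw_reduced w (erefl : reduced ([::], 0).1).
by case: (actw _ w) => Z t; apply: spell_act.
Qed.

Lemma nf_id w : inN w -> nf w = w.
Proof.
elim/last_ind: w => [|w a IH] // HN; rewrite nf_rcons.
have Hw : inN w by apply: (@inN_prefix _ [:: a]); rewrite cats1.
have := IH Hw.
have := actw_reduced w (erefl : reduced ([::], 0).1).
rewrite /nf; case: (actw _ w) => Z t /= HZ Ew.
by rewrite -Ew spell_act_inN // Ew.
Qed.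

Lemma nf_unique u v : inN u -> inN v -> weq u v -> u = v.
Proof. by move=> Hu Hv H; rewrite -(nf_id Hu) -(nf_id Hv) /nf (actw_weq H). Qed.

(** * Edges of the tree T *)

Definition tree_edge (g : word) (a : letter) : Prop :=
  inN (rcons g a) \/ exists P, g = rcons P (linv a).

Lemma onT_weq g g' a : weq g g' -> onT g a -> onT g' a.
Proof.
move=> H [w [u [b [v [Hw [Ew Hu]]]]]]; exists w, u, b, v; do 2!split=> //.
by case: Hu => [[Hu ->]|[Hu ->]]; [left; rewrite -H | right; rewrite -H].
Qed.

Lemma onT_tree_edge g a : inN g -> onT g a <-> tree_edge g a.
Proof.
move=> Hg; split.
  move=> [w [u [b [v [Hw [Ew Hu]]]]]].
  have Hub : inN (rcons u b) by apply: (@inN_prefix _ v); rewrite cat_rcons -Ew.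
  have Hu0 : inN u by apply: (@inN_prefix _ [:: b]); rewrite cats1.
  case: Hu => [[Hu Eb]|[Hu Eb]]; first by left; rewrite -(nf_unique Hu0 Hg Hu) -Eb.
  right; exists u; rewrite -Eb; apply: nf_unique Hg Hub _.
  by rewrite Hu Eb -!cats1 -catA weq_free_r.
case=> [HN|[P EP]]; first by exists (rcons g a), g, a, [::]; rewrite cats1; do 2!split=> //; left.
exists g, P, (linv a), [::]; do 2!split=> //; first by rewrite EP cats1.
right; split=> //; rewrite EP -!cats1 -catA.
by have := weq_free_r P (linv a); rewrite linvK => ->.
Qed.

Lemma tree_edge_x g a : a = xl \/ a = xi -> inN g -> tree_edge g a.
Proof.
move=> Ha HN; case/lastP: g HN => [|P c] HN.
  left; apply: inN_rcons => // [[]|d u e i Ea] //.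
  by case: Ha Ea => ->; case: d.
have [Ec|Ec] := eqVneq c (linv a); first by right; exists P; rewrite Ec.
left; apply: inN_rcons => // [u /rcons_inj [_ Ec']|d u e i Ea _ _].
  by rewrite Ec' eqxx in Ec.
by case: Ha Ea => ->; case: d.
Qed.

Lemma tree_edge_y Q e m d : inN (Q ++ ylet e :: xpow m) ->
  tree_edge (Q ++ ylet e :: xpow m) (ylet d) <-> m < (ybound d)%:Z.
Proof.
move=> HN; rewrite /tree_edge (inN_rcons_y _ HN) linv_ylet; split.
  case=> [[]|[P /rcons_y_xpow]] //.
  by case: (ltrgtP 0 m) => [||<-]; case: (d).
move=> Hm; have [Em|Hm0] := eqVneq m 0; last by left; split=> // -[/eqP]; rewrite (negbTE Hm0).
have [Ee|He] := eqVneq e (~~ d); first by right; exists Q; rewrite Em Ee cats1.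
by left; split=> // -[_ /eqP]; rewrite (negbTE He).
Qed.

Lemma nfword_last n ex eps : exists Q e, nfword n.+1 ex eps = Q ++ ylet e :: xpow (ex 0%N).
Proof.
elim: n => [|n [Q [e IH]]]; first by exists (xpow (ex 1%N)), (eps 1%N).
exists (xpow (ex n.+2) ++ ylet (eps n.+2) :: Q), e.
by rewrite -catA /= -IH.
Qed.

Theorem lemma2p3 :
  (forall (n : nat) (ex : nat -> int) (eps : nat -> bool) (a : letter),
     inN (nfword n ex eps) ->
     (~ onT (nfword n ex eps) a <->
        (a = yl /\ (1 <= n)%N /\ (1 <= ex 0%N)%R) \/
        (a = yi /\ (1 <= n)%N /\ (2 <= ex 0%N)%R))) /\
  (forall (g : word) (a : letter), (a = xl \/ a = xi) -> onT g a).
Proof.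
split=> [n ex eps a HN | g a Ha]; last first.
  apply: onT_weq (weq_sym (nf_weq g)) _.
  by apply/onT_tree_edge; [exact: nf_inN | exact: tree_edge_x (nf_inN g)].
rewrite onT_tree_edge //.
have [Hx|[d ->]] : (a = xl \/ a = xi) \/ exists d, a = ylet d.
  by case: a; [left; left | left; right | right; exists true | right; exists false].
  split=> [H|]; first by case: H; exact: tree_edge_x.
  by case=> -[Ea _]; case: Hx; rewrite Ea.
case: n HN => [|n] HN.
  split=> [H|]; last by case=> -[_ []].
  by case: H; left; exact: inN_rcons_xpow_y.
have [Q [e E]] := nfword_last n ex eps; rewrite E in HN *.
rewrite tree_edge_y //; case: d => /=; split=> [Hm|[][Ea [_ Hm]]] //; try lia.
  by left; do !split=> //; lia.
by right; do !split=> //; lia.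
Qed.
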